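(* For $z=x+iy\in\mathbb{C}$ (with $x,y\in\mathbb{R}$) put $$A(z)=1-y,\qquad B(z)=x^2+y^2-y,\qquad C(z)=y,$$ and $\delta(z)=\delta\big(A(z),B(z),C(z)\big)$, where $\delta$ is the Apollonian depth function on real triples. Consider the maps $$F(x,y)=(x,\,1-y),\qquad S(x,y)=\Big(\tfrac{x}{x^2+y^2},\,\tfrac{y}{x^2+y^2}\Big)\ \ ((x,y)\neq(0,0)),$$ $$R(x,y)=\Big(\tfrac{x}{x^2+(y-1)^2},\,\tfrac{x^2+y^2-y}{x^2+(y-1)^2}\Big)\ \ ((x,y)\neq(0,1)),$$ i.e. $F$ is the reflection in the line $y=1/2$, $S$ is the inversion in the circle $x^2+y^2=1$, and $R$ is the inversion in the circle $x^2+(y-1)^2=1$. Then, for every $z$ in the domain of the respective map, there is a real number $\lambda>0$ (depending on the map and on $z$) such that $$\big(A(Fz),B(Fz),C(Fz)\big)=\big(C(z),B(z),A(z)\big),$$ $$\big(A(Sz),B(Sz),C(Sz)\big)=\lambda\big(B(z),A(z),C(z)\big),$$ $$\big(A(Rz),B(Rz),C(Rz)\big)=\lambda\big(A(z),C(z),B(z)\big),$$ i.e. $F$ interchanges $C$ and $A$, $S$ interchanges $A$ and $B$, and $R$ interchanges $B$ and $C$, up to a common positive rescaling of the three values. Moreover $\delta(Fz)=\delta(z)$, $\delta(Sz)=\delta(z)$ and $\delta(Rz)=\delta(z)$.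
   Context: The Apollonian depth function $\delta:\mathbb{R}^3\to\mathbb{N}\cup\{\infty\}$ is defined as follows. If any of $a,b,c$ is $\le 0$, then $\delta(a,b,c)=0$. Otherwise one performs a process: one step replaces the greatest entry of the current triple by $a+b+c-2\sqrt{ab+bc+ca}$ (where $a,b,c$ are the current entries). The step is repeated until the newly produced number is negative or $0$; $\delta(a,b,c)$ is the number of steps performed (counting the step that produces the non-positive number), and $\delta(a,b,c)=\infty$ if this never happens. For example $(179,62,23)\to(62,23,6)\to(23,6,3)\to(3,2,-1)$, so $\delta(179,62,23)=3$. Geometrically, $A(z),B(z),C(z)$ are (up to a common positive scale) the signed curvatures of the three mutually tangent disks of a tricycle whose two tangency spinors, normalized, are $(1,0)$ and $(x,y)$. *)

From HB Require Import structures.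
From mathcomp Require Import all_boot all_order all_algebra.
From mathcomp Require Import boolp reals.
Set Implicit Arguments. Unset Strict Implicit. Unset Printing Implicit Defensive.
Import Order.TTheory GRing.Theory Num.Theory.
Local Open Scope ring_scope.

Section Apollonian.
Variable R : realType.

Definition apo_new (a b c : R) : R :=
  a + b + c - 2 * Num.sqrt (a * b + b * c + c * a).

Definition apo_step (t : R * R * R) : R * R * R :=
  let: (a, b, c) := t in
  let n := apo_new a b c in
  if (b <= a) && (c <= a) then (n, b, c)
  else if c <= b then (a, n, c) else (a, b, n).

(* the number produced by step k+1 (steps counted from 1) *)
Definition apo_produced (t : R * R * R) (k : nat) : R :=
  let: (a, b, c) := iter k apo_step t in apo_new a b c.

(* Apollonian depth; None encodes infinity *)
Definition apo_depth (a b c : R) : option nat :=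
  if [|| a <= 0, b <= 0 | c <= 0] then Some 0%N
  else match pselect (exists k : nat, apo_produced (a, b, c) k <= 0) with
       | left h => Some (@ex_minn (fun k => apo_produced (a, b, c) k <= 0) h).+1
       | right _ => None
       end.

Definition Az (p : R * R) : R := 1 - p.2.
Definition Bz (p : R * R) : R := p.1 ^+ 2 + p.2 ^+ 2 - p.2.
Definition Cz (p : R * R) : R := p.2.
Definition deltaz (p : R * R) : option nat := apo_depth (Az p) (Bz p) (Cz p).

Definition Fmap (p : R * R) : R * R := (p.1, 1 - p.2).
Definition Smap (p : R * R) : R * R :=
  (p.1 / (p.1 ^+ 2 + p.2 ^+ 2), p.2 / (p.1 ^+ 2 + p.2 ^+ 2)).
Definition Rmap (p : R * R) : R * R :=
  (p.1 / (p.1 ^+ 2 + (p.2 - 1) ^+ 2),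
   (p.1 ^+ 2 + p.2 ^+ 2 - p.2) / (p.1 ^+ 2 + (p.2 - 1) ^+ 2)).
End Apollonian.

From HB Require Import structures.
From mathcomp Require Import all_boot all_order all_algebra.
From mathcomp Require Import boolp reals.
From mathcomp Require Import ring lra.
Set Implicit Arguments. Unset Strict Implicit.
Import Order.TTheory GRing.Theory Num.Theory.
Local Open Scope ring_scope.

(* The new curvature a + b + c - 2 sqrt(ab + bc + ca) is a symmetric and
   positively homogeneous function of the triple, and the outcome of a step,
   as a multiset, does not depend on which greatest entry is replaced.  Hence
   the sequence of produced numbers, and so the depth, is unchanged when the
   triple is permuted and rescaled by a positive factor.  A direct computation
   shows that F, S and R act on (A, B, C) by exactly such transformations. *)

Lemma perm_swap12 (T : eqType) (a b c : T) : perm_eq [:: a; b; c] [:: b; a; c].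
Proof. exact: permEl (perm_catCA [:: a] [:: b] [:: c]). Qed.

Lemma perm_swap23 (T : eqType) (a b c : T) : perm_eq [:: a; b; c] [:: a; c; b].
Proof. by rewrite perm_cons; exact: permEl (perm_rcons c [:: b]). Qed.

Lemma perm_rev3 (T : eqType) (a b c : T) : perm_eq [:: c; b; a] [:: a; b; c].
Proof. exact: permEl (perm_rev [:: a; b; c]). Qed.

Lemma perm_rot3 (T : eqType) (a b c : T) : perm_eq [:: a; b; c] [:: c; a; b].
Proof. exact: permEl (perm_rcons c [:: a; b]). Qed.

Section ApollonianInvariance.
Variable R : realType.

Definition entries (t : R * R * R) : seq R := [:: t.1.1; t.1.2; t.2].

(* [(sum x)^2 - sum x^2 = 2 (ab + bc + ca)] *)
Definition apo_new_seq (s : seq R) : R :=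
  \sum_(x <- s) x
  - 2 * Num.sqrt (((\sum_(x <- s) x) ^+ 2 - \sum_(x <- s) x ^+ 2) / 2).

Lemma apo_newE a b c : apo_new a b c = apo_new_seq [:: a; b; c].
Proof.
rewrite /apo_new /apo_new_seq !big_cons !big_nil.
by congr (_ - 2 * Num.sqrt _); [ring | field].
Qed.

Lemma perm_apo_new_seq s s' : perm_eq s s' -> apo_new_seq s = apo_new_seq s'.
Proof. by move=> ss'; rewrite /apo_new_seq !(perm_big _ ss'). Qed.

Lemma apo_new_seq_scale l s :
  0 < l -> apo_new_seq (map ( *%R l) s) = l * apo_new_seq s.
Proof.
move=> l_gt0; rewrite /apo_new_seq !big_map.
have -> : \sum_(x <- s) (l * x) ^+ 2 = l ^+ 2 * \sum_(x <- s) x ^+ 2.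
  by rewrite mulr_sumr; apply: eq_bigr => x _; rewrite exprMn.
rewrite -mulr_sumr.
set X := \sum_(x <- s) x; set Y := \sum_(x <- s) x ^+ 2.
have -> : ((l * X) ^+ 2 - l ^+ 2 * Y) / 2 = l ^+ 2 * ((X ^+ 2 - Y) / 2) by ring.
by rewrite sqrtrM ?sqr_ge0 // sqrtr_sqr gtr0_norm //; ring.
Qed.

Definition is_max (m : R) (s : seq R) := (m \in s) && all (fun x => x <= m) s.

Lemma is_max_uniq m m' s : is_max m s -> is_max m' s -> m = m'.
Proof.
case/andP=> ms /allP m_ub /andP[m's /allP m'_ub].
by apply/le_anti; rewrite m'_ub ?m_ub.
Qed.

Lemma is_max_perm_scale l m s s' : 0 < l -> perm_eq s' (map ( *%R l) s) ->
  is_max m s -> is_max (l * m) s'.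
Proof.
move=> l_gt0 ss' /andP[ms m_ub].
rewrite /is_max (perm_mem ss') map_f //= (perm_all _ ss') all_map.
by apply: sub_all m_ub => x /=; rewrite ler_pM2l.
Qed.

Lemma apo_step_spec t : exists m r,
  [/\ is_max m (entries t), perm_eq (entries t) (m :: r)
    & perm_eq (entries (apo_step t)) (apo_new_seq (entries t) :: r)].
Proof.
case: t => [[a b] c]; rewrite /entries /apo_step /= -apo_newE /is_max.
case: ifP => [/andP[ba ca] | a_not_max].
  by exists a, [:: b; c]; rewrite /= !inE eqxx lexx ba ca.
case: leP => [cb | bc].
  have ab : a <= b.
    by rewrite leNgt; apply: contraFN a_not_max => ba; apply/andP; lra.
  by exists b, [:: a; c]; rewrite /= !inE eqxx orbT ab lexx cb !perm_swap12.
have ac : a <= c.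
  by rewrite leNgt; apply: contraFN a_not_max => ca; apply/andP; lra.
by exists c, [:: a; b]; rewrite /= !inE eqxx !orbT ac (ltW bc) lexx !perm_rot3.
Qed.

Lemma apo_step_perm_scale l t t' : 0 < l ->
  perm_eq (entries t') (map ( *%R l) (entries t)) ->
  perm_eq (entries (apo_step t')) (map ( *%R l) (entries (apo_step t))).
Proof.
move=> l_gt0 tt'.
have [m [r [m_max tmr step_t]]] := apo_step_spec t.
have [m' [r' [m'_max tmr' step_t']]] := apo_step_spec t'.
have m'E : m' = l * m.
  exact: is_max_uniq m'_max (is_max_perm_scale l_gt0 tt' m_max).
subst m'.
have rr' : perm_eq r' (map ( *%R l) r).
  rewrite -(perm_cons (l * m)) -(permPl tmr') (permPl tt').
  exact: perm_map tmr.
rewrite (permPl step_t') (permPr (perm_map _ step_t)) /=.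
by rewrite (perm_apo_new_seq tt') apo_new_seq_scale // perm_cons.
Qed.

Lemma apo_producedE t k :
  apo_produced t k = apo_new_seq (entries (iter k (@apo_step R) t)).
Proof.
by rewrite /apo_produced; case: (iter k (@apo_step R) t) => [[a b] c]; rewrite apo_newE.
Qed.

Lemma apo_produced_perm_scale l t t' k : 0 < l ->
  perm_eq (entries t') (map ( *%R l) (entries t)) ->
  apo_produced t' k = l * apo_produced t k.
Proof.
move=> l_gt0 tt'; rewrite !apo_producedE -apo_new_seq_scale //.
apply: perm_apo_new_seq; elim: k => //= k IHk.
exact: apo_step_perm_scale.
Qed.

Lemma apo_depth_perm_scale (l a b c a' b' c' : R) : 0 < l ->
  perm_eq [:: a'; b'; c'] (map ( *%R l) [:: a; b; c]) ->
  apo_depth a' b' c' = apo_depth a b c.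
Proof.
move=> l_gt0 tt'; rewrite /apo_depth.
have -> : [|| a' <= 0, b' <= 0 | c' <= 0] = [|| a <= 0, b <= 0 | c <= 0].
  transitivity (has (fun x => x <= 0) [:: a'; b'; c']); first by rewrite /= orbF.
  by rewrite (perm_has _ tt') has_map /= orbF !pmulr_rle0.
case: ifP => // _.
have nonpos_produced k :
    (apo_produced (a', b', c') k <= 0) = (apo_produced (a, b, c) k <= 0).
  by rewrite (@apo_produced_perm_scale l (a, b, c) (a', b', c')) ?pmulr_rle0.
case: pselect => [ex' | nex']; case: pselect => [ex | nex] //.
- by congr (Some _.+1); apply: eq_ex_minn.
- by case: nex; case: ex' => k; exists k; rewrite -nonpos_produced.
- by case: nex'; case: ex => k; exists k; rewrite nonpos_produced.
Qed.

Lemma deltaz_perm_scale l (p q : R * R) : 0 < l ->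
  perm_eq (entries (Az q, Bz q, Cz q)) (map ( *%R l) (entries (Az p, Bz p, Cz p))) ->
  deltaz q = deltaz p.
Proof. exact: apo_depth_perm_scale. Qed.

Lemma sqr_add_gt0 (x y : R) : (x, y) != (0, 0) -> 0 < x ^+ 2 + y ^+ 2.
Proof.
move=> xy_neq0; rewrite lt_def addr_ge0 ?sqr_ge0 // andbT.
rewrite paddr_eq0 ?sqr_ge0 // !sqrf_eq0.
by apply: contra xy_neq0 => /andP[/eqP-> /eqP->].
Qed.

Lemma Fmap_ABC (p : R * R) :
  (Az (Fmap p), Bz (Fmap p), Cz (Fmap p)) = (Cz p, Bz p, Az p).
Proof. by rewrite /Az /Bz /Cz /Fmap /=; congr (_, _, _); ring. Qed.

Lemma Smap_ABC (x y : R) : (x, y) != (0, 0) ->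
  let lam := (x ^+ 2 + y ^+ 2)^-1 in
  (Az (Smap (x, y)), Bz (Smap (x, y)), Cz (Smap (x, y)))
    = (lam * Bz (x, y), lam * Az (x, y), lam * Cz (x, y)).
Proof.
move=> /sqr_add_gt0 /lt0r_neq0 d_neq0 /=.
by rewrite /Az /Bz /Cz /Smap /=; congr (_, _, _); field.
Qed.

Lemma Rmap_ABC (x y : R) : (x, y) != (0, 1) ->
  let lam := (x ^+ 2 + (y - 1) ^+ 2)^-1 in
  (Az (Rmap (x, y)), Bz (Rmap (x, y)), Cz (Rmap (x, y)))
    = (lam * Az (x, y), lam * Cz (x, y), lam * Bz (x, y)).
Proof.
move=> xy_neq01.
have /sqr_add_gt0 /lt0r_neq0 d_neq0 : (x, y - 1) != (0, 0).
  by apply: contra xy_neq01; rewrite !xpair_eqE subr_eq0.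
by rewrite /Az /Bz /Cz /Rmap /=; congr (_, _, _); field.
Qed.

End ApollonianInvariance.

Theorem proposition2 (R : realType) :
  (forall x y : R,
     (Az (Fmap (x, y)), Bz (Fmap (x, y)), Cz (Fmap (x, y)))
       = (Cz (x, y), Bz (x, y), Az (x, y))
     /\ deltaz (Fmap (x, y)) = deltaz (x, y))
  /\
  (forall x y : R, (x, y) != (0, 0) ->
     (exists2 lam : R, 0 < lam &
       (Az (Smap (x, y)), Bz (Smap (x, y)), Cz (Smap (x, y)))
         = (lam * Bz (x, y), lam * Az (x, y), lam * Cz (x, y)))
     /\ deltaz (Smap (x, y)) = deltaz (x, y))
  /\
  (forall x y : R, (x, y) != (0, 1) ->
     (exists2 lam : R, 0 < lam &
       (Az (Rmap (x, y)), Bz (Rmap (x, y)), Cz (Rmap (x, y)))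
         = (lam * Az (x, y), lam * Cz (x, y), lam * Bz (x, y)))
     /\ deltaz (Rmap (x, y)) = deltaz (x, y)).
Proof.
split; [|split] => x y.
- split; first exact: Fmap_ABC.
  apply: (@deltaz_perm_scale _ 1) => //; rewrite Fmap_ABC /= !mul1r.
  exact: perm_rev3.
- move=> xy_neq0; have lam_gt0 : 0 < (x ^+ 2 + y ^+ 2)^-1.
    by rewrite invr_gt0 sqr_add_gt0.
  split; first by exists (x ^+ 2 + y ^+ 2)^-1; rewrite // Smap_ABC.
  by apply: (deltaz_perm_scale lam_gt0); rewrite Smap_ABC // perm_swap12.
- move=> xy_neq01; have lam_gt0 : 0 < (x ^+ 2 + (y - 1) ^+ 2)^-1.
    by rewrite invr_gt0 sqr_add_gt0 // !xpair_eqE subr_eq0.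
  split; first by exists (x ^+ 2 + (y - 1) ^+ 2)^-1; rewrite // Rmap_ABC.
  by apply: (deltaz_perm_scale lam_gt0); rewrite Rmap_ABC // perm_swap23.
Qed.
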